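(* Let $\tau$ be a signature with no function or constant symbols and $\varphi$ a sentence of $\mathcal L_{\omega,\omega}(\tau)$. (i) If $\varphi$ is a $\Sigma^0_2$-sentence, then $\vartheta(\varphi)$ is expressible by a sentence of $\mathcal L_{\omega,\omega}(\tau)$. (ii) If there is a natural number $n\ge 1$ such that $\neg\varphi$ has no model of cardinality $n$, then $\vartheta(\varphi)$ is expressible by a sentence of $\mathcal L_{\omega,\omega}(\tau)$. (iii) $\vartheta(\varphi)$ is expressed by $\varphi$ itself (i.e. for every $\tau$-model $\mathfrak A$, $\mathfrak A\vDash\vartheta(\varphi)$ iff $\mathfrak A\vDash\varphi$) if and only if $\varphi$ is logically equivalent to an existential ($\Sigma^0_1$) sentence.
   Context: Models are nonempty. A submodel of a $\tau$-model $\mathfrak A$ is a substructure (nonempty subset closed under the interpretations of the function and constant symbols of $\tau$, with induced structure). $\mathcal L_{\omega,\omega}(\tau)$ is ordinary first-order logic with equality. $\mathfrak A\vDash\vartheta(\varphi)$ iff some submodel of $\mathfrak A$ satisfies $\varphi$. A property of $\tau$-models is expressible by a sentence $\chi$ if for every $\tau$-model $\mathfrak A$, $\mathfrak A$ has the property iff $\mathfrak A\vDash\chi$. A $\Sigma^0_2$-sentence is a prenex sentence $\exists\bar x\,\forall\bar y\,\psi_0$ with $\psi_0$ quantifier-free; a $\Sigma^0_1$ (existential) sentence is one of the form $\exists\bar x\,\psi_0$ with $\psi_0$ quantifier-free. *)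

From mathcomp Require Import all_boot.
Set Implicit Arguments.
Unset Strict Implicit.
Unset Printing Implicit Defensive.

Record signature := Signature {
  rsym : Type;
  arity : rsym -> nat
}.

Section FOL.
Variable tau : signature.

Inductive form : Type :=
| FBot : form
| FEq : nat -> nat -> form
| FRel : forall r : rsym tau, ('I_(arity r) -> nat) -> form
| FNeg : form -> form
| FAnd : form -> form -> form
| FOr : form -> form -> form
| FImp : form -> form -> form
| FEx : nat -> form -> form
| FAll : nat -> form -> form.

(* Models are nonempty. *)
Record structure := Structure {
  carrier :> Type;
  witness : carrier;
  interp : forall r : rsym tau, ('I_(arity r) -> carrier) -> Prop
}.

Definition upd (A : Type) (e : nat -> A) (x : nat) (a : A) : nat -> A :=
  fun y => if y == x then a else e y.

Fixpoint sat (A : structure) (e : nat -> A) (f : form) : Prop :=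
  match f with
  | FBot => False
  | FEq x y => e x = e y
  | FRel r v => @interp A r (fun i => e (v i))
  | FNeg g => ~ sat e g
  | FAnd g h => sat e g /\ sat e h
  | FOr g h => sat e g \/ sat e h
  | FImp g h => sat e g -> sat e h
  | FEx x g => exists a : A, sat (upd e x a) g
  | FAll x g => forall a : A, sat (upd e x a) g
  end.

Fixpoint free (x : nat) (f : form) : Prop :=
  match f with
  | FBot => False
  | FEq y z => x = y \/ x = z
  | FRel r v => exists i, v i = x
  | FNeg g => free x g
  | FAnd g h | FOr g h | FImp g h => free x g \/ free x h
  | FEx y g | FAll y g => x <> y /\ free x g
  end.

Definition sentence (f : form) : Prop := forall x, ~ free x f.

Definition models (A : structure) (f : form) : Prop := forall e : nat -> A, sat e f.

Fixpoint qfree (f : form) : Prop :=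
  match f with
  | FBot | FEq _ _ | FRel _ _ => True
  | FNeg g => qfree g
  | FAnd g h | FOr g h | FImp g h => qfree g /\ qfree h
  | FEx _ _ | FAll _ _ => False
  end.

Definition Exs (xs : seq nat) (f : form) : form := foldr FEx f xs.
Definition Alls (xs : seq nat) (f : form) : form := foldr FAll f xs.

Definition sigma01 (f : form) : Prop :=
  sentence f /\ exists xs psi, qfree psi /\ f = Exs xs psi.
Definition sigma02 (f : form) : Prop :=
  sentence f /\ exists xs ys psi, qfree psi /\ f = Exs xs (Alls ys psi).

(* Submodels: with no function/constant symbols, a submodel is the induced
   structure on an arbitrary nonempty subset. *)
Definition submodel (A : structure) (P : A -> Prop) (a0 : A) (h0 : P a0)
  : structure :=
  @Structure {a : A | P a} (exist P a0 h0)
    (fun r v => @interp A r (fun i => proj1_sig (v i))).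

Definition vartheta_sat (A : structure) (f : form) : Prop :=
  exists (P : A -> Prop) (a0 : A) (h0 : P a0), models (submodel h0) f.

Definition expressed_by (Prp : structure -> Prop) (chi : form) : Prop :=
  sentence chi /\ forall A : structure, Prp A <-> models A chi.

Definition expressible (Prp : structure -> Prop) : Prop :=
  exists chi, expressed_by Prp chi.

Definition has_card (A : structure) (n : nat) : Prop :=
  exists g : 'I_n -> A, bijective g.

Definition log_equiv (f g : form) : Prop :=
  forall A : structure, models A f <-> models A g.

End FOL.

(* Parts (i) and (ii): the property "some submodel with at most n elements
   satisfies phi" is first order, by relativizing the quantifiers of phi to n
   existentially quantified elements, and it implies vartheta(phi). For a
   Sigma^0_2 sentence exists xs, forall ys, psi, conversely, the witnesses xs
   together with one more point span such a submodel, because universal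
   formulas pass to submodels. Under (ii), either the model has n distinct
   elements, whose span has exactly n elements and hence satisfies phi, or it
   is covered by n elements, and then so is every submodel.
   Part (iii): vartheta(phi) is expressed by phi exactly when phi is preserved
   under extensions. Existential sentences are, and conversely the Los-Tarski
   theorem, proved with ultraproducts and finite pieces of diagrams, turns a
   sentence preserved under extensions into an existential one. *)

From Stdlib Require List.
From mathcomp Require Import all_boot boolp classical_sets filter.

Set Implicit Arguments.
Unset Strict Implicit.
Unset Printing Implicit Defensive.

Lemma proj1_sig_inj (T : Type) (P : T -> Prop) : injective (@proj1_sig T P).
Proof. by case=> a pa [b pb] /= ab; exact: eq_exist. Qed.

Lemma InE (T : eqType) (x : T) (s : seq T) : List.In x s <-> x \in s.
Proof.
elim: s => [|y s IH] //=; rewrite in_cons; split.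
- by case=> [->|/IH ->]; rewrite ?eqxx ?orbT.
- by case/orP=> [/eqP ->|/IH]; [left|right].
Qed.

Lemma In_map (X Y : Type) (f : X -> Y) (x : X) (s : seq X) :
  List.In x s -> List.In (f x) (map f s).
Proof. by elim: s => [|y s IH] //= [->|/IH]; [left|right]. Qed.

Lemma In_nth (X : Type) (x0 a : X) (s : seq X) :
  List.In a s -> exists2 p, p < size s & nth x0 s p = a.
Proof. by elim: s => [|b s IH] //= [<-|/IH [p ps <-]]; [exists 0|exists p.+1]. Qed.

Lemma In_cat (X : Type) (x : X) (s1 s2 : seq X) :
  List.In x (s1 ++ s2) <-> List.In x s1 \/ List.In x s2.
Proof.
elim: s1 => [|y s1 IH] /=; first by split; [right|case].
by rewrite IH; tauto.
Qed.

Section Semantics.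
Variable tau : signature.
Implicit Types (A B C : structure tau) (f g : form tau).

Lemma upd_eq (X : Type) (e : nat -> X) x a : upd e x a x = a.
Proof. by rewrite /upd eqxx. Qed.

Lemma upd_neq (X : Type) (e : nat -> X) x y a : y <> x -> upd e x a y = e y.
Proof. by rewrite /upd => /eqP/negbTE ->. Qed.

Lemma sat_free_eq A f (e e' : nat -> A) :
  (forall x, free x f -> e x = e' x) -> sat e f <-> sat e' f.
Proof.
elim: f e e' => [|x y|r v|g IH|g IH h IH'|g IH h IH'|g IH h IH'|y g IH|y g IH]
  e e' ee' /=.
- by [].
- by rewrite (ee' x) ?(ee' y) //=; [right|left].
- have -> : (fun i => e (v i)) = (fun i => e' (v i)).
    by apply: funext => i; apply: ee'; exists i.
  by [].
- by rewrite (IH e e').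
- by rewrite (IH e e') ?(IH' e e') // => x fx; apply: ee'; [right|left].
- by rewrite (IH e e') ?(IH' e e') // => x fx; apply: ee'; [right|left].
- by rewrite (IH e e') ?(IH' e e') // => x fx; apply: ee'; [right|left].
- have eq_upd a : sat (upd e y a) g <-> sat (upd e' y a) g.
    by apply: IH => x fx; rewrite /upd; case: eqP => // xy; apply: ee'.
  by split=> [[a]|[a]] /eq_upd; exists a.
- have eq_upd a : sat (upd e y a) g <-> sat (upd e' y a) g.
    by apply: IH => x fx; rewrite /upd; case: eqP => // xy; apply: ee'.
  by split=> ga a; apply/eq_upd.
Qed.

Lemma sat_sentence A f (e e' : nat -> A) : sentence f -> sat e f -> sat e' f.
Proof. by move=> fs; rewrite (sat_free_eq (e' := e')) // => x /fs. Qed.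

Lemma modelsP A f : sentence f -> models A f <-> exists e : nat -> A, sat e f.
Proof.
move=> fs; split=> [Af|[e fe] e']; first by exists (fun=> witness A).
exact: sat_sentence fe.
Qed.

Lemma models_FNeg A f : sentence f -> models A (FNeg f) <-> ~ models A f.
Proof.
move=> fs; split=> [nf Af|nAf e fe]; first exact: nf (fun=> witness A) (Af _).
by apply: nAf => e'; apply: sat_sentence fe.
Qed.

Lemma free_Exs x xs f : free x (Exs xs f) <-> free x f /\ x \notin xs.
Proof.
elim: xs => [|y xs IH] /=; first by split=> [|[]].
rewrite in_cons negb_or IH; split.
- by move=> [/eqP xy [fx xxs]]; rewrite xy.
- by move=> [fx /andP [/eqP xy xxs]].
Qed.

Lemma sat_Exs A xs f (e : nat -> A) :
  sat e (Exs xs f) <-> exists2 t, sat t f & forall y, y \notin xs -> t y = e y.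
Proof.
elim: xs e => [|x xs IH] e /=.
  split=> [fe|[t ft te]]; first by exists e.
  by rewrite -(sat_free_eq (e := t)) // => y _; apply: te.
split=> [[a /IH [t ft te]]|[t ft te]].
  exists t => // y; rewrite in_cons negb_or => /andP [/eqP yx yxs].
  by rewrite te // upd_neq.
exists (t x); apply/IH; exists t => // y yxs; rewrite /upd; case: eqP => [-> //|yx].
by apply: te; rewrite in_cons negb_or yxs andbT; apply/eqP.
Qed.

Lemma sat_Exs_of_free A xs f (t e : nat -> A) :
  (forall x, free x f -> x \in xs) -> sat t f -> sat e (Exs xs f).
Proof.
move=> fxs tf; apply/sat_Exs; exists (fun y => if y \in xs then t y else e y).
  by rewrite -(sat_free_eq (e := t)) // => x /fxs ->.
by move=> y /negbTE ->.
Qed.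

Definition embedding B C (h : B -> C) : Prop :=
  injective h /\
  forall r (v : 'I_(arity r) -> B), interp v <-> interp (fun i => h (v i)).

Section Embedding.
Variables (B C : structure tau) (h : B -> C).
Hypothesis h_emb : embedding h.

Lemma upd_comp (e : nat -> B) y a :
  (fun n => h (upd e y a n)) = upd (fun n => h (e n)) y (h a).
Proof. by apply: funext => n; rewrite /upd; case: eqP. Qed.

Lemma sat_qfree_embedding f (e : nat -> B) :
  qfree f -> sat e f <-> sat (fun n => h (e n)) f.
Proof.
case: h_emb => h_inj h_rel.
elim: f e => [|x y|r v|g IH|g IH k IH'|g IH k IH'|g IH k IH'|y g IH|y g IH]
  e //= fq.
- by split=> [->|/h_inj].
- by rewrite IH.
- by case: fq => /IH -> /IH' ->.
- by case: fq => /IH -> /IH' ->.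
- by case: fq => /IH -> /IH' ->.
Qed.

Lemma sat_Alls_embedding ys f (e : nat -> B) :
  qfree f -> sat (fun n => h (e n)) (Alls ys f) -> sat e (Alls ys f).
Proof.
move=> fq; elim: ys e => [|y ys IH] e /=; first by rewrite -sat_qfree_embedding.
by move=> fe a; apply: IH; rewrite upd_comp.
Qed.

Lemma sat_Exs_embedding xs f (e : nat -> B) :
  qfree f -> sat e (Exs xs f) -> sat (fun n => h (e n)) (Exs xs f).
Proof.
move=> fq; elim: xs e => [|x xs IH] e /=; first by rewrite -sat_qfree_embedding.
by case=> a /IH fa; exists (h a); rewrite -upd_comp.
Qed.

Hypothesis h_surj : forall c, exists b, h b = c.

Lemma sat_isomorphism f (e : nat -> B) : sat e f <-> sat (fun n => h (e n)) f.
Proof.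
case: h_emb => h_inj h_rel.
elim: f e => [|x y|r v|g IH|g IH k IH'|g IH k IH'|g IH k IH'|y g IH|y g IH]
  e //=.
- by split=> [->|/h_inj].
- by rewrite IH.
- by rewrite IH IH'.
- by rewrite IH IH'.
- by rewrite IH IH'.
- split=> [[a]|[c]]; first by rewrite IH upd_comp; exists (h a).
  by have [a <-] := h_surj c; rewrite -upd_comp -IH; exists a.
- split=> ga c; last by rewrite IH upd_comp.
  by have [a <-] := h_surj c; rewrite -upd_comp -IH.
Qed.

Lemma models_isomorphism f : sentence f -> models B f <-> models C f.
Proof.
move=> fs; rewrite !modelsP //; split=> [[e fe]|[e fe]].
  by exists (fun n => h (e n)); apply/sat_isomorphism.
have [b _] := h_surj (witness C).
by exists (fun=> b); apply/sat_isomorphism; apply: sat_sentence fe.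
Qed.

End Embedding.

Lemma preimage_assignment B C (h : B -> C) (e : nat -> C) (S : nat -> Prop) :
  (forall x, S x -> exists b, h b = e x) ->
  exists e' : nat -> B, forall x, S x -> h (e' x) = e x.
Proof.
move=> Se; exists (fun x =>
  if pselect (exists b, h b = e x) is left p then proj1_sig (cid p) else witness B).
move=> x /Se ex; case: pselect => [p|//]; exact: proj2_sig (cid p).
Qed.

Section Submodels.
Variable A : structure tau.

Lemma val_embedding (P : A -> Prop) a0 (hP : P a0) :
  embedding (@proj1_sig A P : submodel hP -> A).
Proof. by split=> //; exact: proj1_sig_inj. Qed.

Definition submodel_incl (P Q : A -> Prop) a0 (hP : P a0) b0 (hQ : Q b0)
  (PQ : forall a, P a -> Q a) (x : submodel hP) : submodel hQ :=
  exist Q (proj1_sig x) (PQ _ (proj2_sig x)).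

Lemma submodel_incl_embedding (P Q : A -> Prop) a0 (hP : P a0) b0 (hQ : Q b0)
  (PQ : forall a, P a -> Q a) : embedding (submodel_incl (hP := hP) hQ PQ).
Proof. by split=> // x y /(congr1 (@proj1_sig _ _)) /= /proj1_sig_inj. Qed.

Lemma models_submodel_eq (P Q : A -> Prop) a0 (hP : P a0) b0 (hQ : Q b0) f :
  sentence f -> (forall a, P a <-> Q a) ->
  models (submodel hP) f -> models (submodel hQ) f.
Proof.
move=> fs PQ.
have incl_surj (c : submodel hQ) :
    exists b, submodel_incl (hP := hP) hQ (fun a => (PQ a).1) b = c.
  by case: c => a Qa; exists (exist P a ((PQ a).2 Qa)); apply: proj1_sig_inj.
exact: (models_isomorphism (submodel_incl_embedding hP hQ _) incl_surj fs).1.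
Qed.

Lemma models_submodelT f :
  sentence f -> models (@submodel tau A (fun=> True) (witness A) I) f <-> models A f.
Proof.
move=> fs.
pose h : A -> @submodel tau A (fun=> True) (witness A) I := fun a => exist _ a I.
have h_emb : embedding h by split=> // a b [].
have h_surj c : exists a, h a = c by case: c => a []; exists a.
exact: iff_sym (models_isomorphism h_emb h_surj fs).
Qed.

Lemma models_image B (h : B -> A) f : embedding h -> sentence f ->
  models B f ->
  models (@submodel tau A (fun a => exists b, h b = a) (h (witness B))
            (ex_intro _ (witness B) erefl)) f.
Proof.
case=> h_inj h_rel fs.
pose k : B -> @submodel tau A (fun a => exists b, h b = a) (h (witness B))
            (ex_intro _ (witness B) erefl) := fun b => exist _ (h b) (ex_intro _ b erefl).
have k_emb : embedding k by split=> // a b [/h_inj].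
have k_surj c : exists b, k b = c by case: c => a [b hb]; exists b; exact: eq_exist.
exact: (models_isomorphism k_emb k_surj fs).1.
Qed.

End Submodels.

Definition preserved_by_extensions (phi : form tau) : Prop :=
  forall B C (h : B -> C), embedding h -> models B phi -> models C phi.

Lemma preserved_of_vartheta phi : sentence phi ->
  (forall A, vartheta_sat A phi <-> models A phi) -> preserved_by_extensions phi.
Proof.
move=> phis vphi B C h h_emb Bphi; apply/vphi.
by do 3 eexists; exact: models_image h_emb phis Bphi.
Qed.

Lemma vartheta_sat_of_models A phi : sentence phi -> models A phi -> vartheta_sat A phi.
Proof. by move=> phis Aphi; exists (fun=> True), (witness A), I; apply/models_submodelT. Qed.

Lemma preserved_sigma01 psi : sigma01 psi -> preserved_by_extensions psi.
Proof.
move=> [psis [xs [p [pq psiE]]]] B C h h_emb; subst psi.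
rewrite !modelsP // => -[e /(sat_Exs_embedding h_emb pq) he].
by exists (fun n => h (e n)).
Qed.

Lemma vartheta_of_existential phi : sentence phi ->
  (exists psi, sigma01 psi /\ log_equiv phi psi) ->
  expressed_by (fun A => vartheta_sat A phi) phi.
Proof.
move=> phis [psi [psi01 phipsi]]; split=> // A.
split=> [[P [a0 [hP /phipsi Ppsi]]]|]; last exact: vartheta_sat_of_models.
by apply/phipsi; apply: preserved_sigma01 psi01 _ _ _ (val_embedding hP) Ppsi.
Qed.

Fixpoint var_bound (f : form tau) : nat :=
  match f with
  | FBot => 0
  | FEq x y => (maxn x y).+1
  | FRel r v => \max_(i < arity r) (v i).+1
  | FNeg g => var_bound g
  | FAnd g h | FOr g h | FImp g h => maxn (var_bound g) (var_bound h)
  | FEx y g | FAll y g => maxn y.+1 (var_bound g)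
  end.

Lemma free_var_bound x f : free x f -> x < var_bound f.
Proof.
elim: f => [|y z|r v|g IH|g IH k IH'|g IH k IH'|g IH k IH'|y g IH|y g IH] //=.
- by case=> ->; rewrite ltnS ?leq_maxl ?leq_maxr.
- by case=> i <-; apply: leq_trans (leq_bigmax i).
- by case=> [/IH|/IH'] fx; apply: leq_trans fx _; rewrite ?leq_maxl ?leq_maxr.
- by case=> [/IH|/IH'] fx; apply: leq_trans fx _; rewrite ?leq_maxl ?leq_maxr.
- by case=> [/IH|/IH'] fx; apply: leq_trans fx _; rewrite ?leq_maxl ?leq_maxr.
- by case=> _ /IH fx; apply: leq_trans fx _; rewrite leq_maxr.
- by case=> _ /IH fx; apply: leq_trans fx _; rewrite leq_maxr.
Qed.

Definition in_vars (y : nat) (zs : seq nat) : form tau :=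
  foldr (fun z g => FOr (FEq tau y z) g) (FBot tau) zs.

Lemma sat_in_vars A (e : nat -> A) y zs :
  sat e (in_vars y zs) <-> exists2 z, z \in zs & e y = e z.
Proof.
elim: zs => [|z zs IH] /=; first by split=> [|[]].
rewrite IH; split=> [[yz|[w wzs yw]]|[w]].
- by exists z; rewrite ?mem_head.
- by exists w; rewrite // in_cons wzs orbT.
- by rewrite in_cons => /orP [/eqP -> ->|wzs yw]; [left|right; exists w].
Qed.

Lemma free_in_vars x y zs : free x (in_vars y zs) -> x = y \/ x \in zs.
Proof.
elim: zs => [|z zs IH] //= [[->|->]|/IH [->|xzs]]; rewrite ?mem_head; auto.
by right; rewrite in_cons xzs orbT.
Qed.

Fixpoint relativize (zs : seq nat) (f : form tau) : form tau :=
  match f with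
  | FNeg g => FNeg (relativize zs g)
  | FAnd g h => FAnd (relativize zs g) (relativize zs h)
  | FOr g h => FOr (relativize zs g) (relativize zs h)
  | FImp g h => FImp (relativize zs g) (relativize zs h)
  | FEx y g => FEx y (FAnd (in_vars y zs) (relativize zs g))
  | FAll y g => FAll y (FImp (in_vars y zs) (relativize zs g))
  | _ => f
  end.

Lemma free_relativize x zs f : free x (relativize zs f) -> free x f \/ x \in zs.
Proof.
elim: f => [|y z|r v|g IH|g IH k IH'|g IH k IH'|g IH k IH'|y g IH|y g IH] /=;
  try by left.
- exact: IH.
- by case=> [/IH|/IH'] []; auto.
- by case=> [/IH|/IH'] []; auto.
- by case=> [/IH|/IH'] []; auto.
- by case=> xy [/free_in_vars []|/IH []]; auto.
- by case=> xy [/free_in_vars []|/IH []]; auto.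
Qed.

Section Relativization.
Variables (A : structure tau) (P : A -> Prop) (a0 : A) (hP : P a0).
Variables (zs : seq nat) (M : nat).
Hypothesis zs_ge : forall z, z \in zs -> M <= z.

Definition enumerates (E : nat -> A) : Prop :=
  forall a, P a <-> exists2 z, z \in zs & E z = a.

Lemma upd_vars (E : nat -> A) y a z : y < M -> z \in zs -> upd E y a z = E z.
Proof. by move=> yM /zs_ge zM; rewrite upd_neq // => zy; rewrite zy leqNgt yM in zM. Qed.

Lemma enumerates_upd (E : nat -> A) y a : y < M -> enumerates E -> enumerates (upd E y a).
Proof.
move=> yM EP b; rewrite EP.
by split=> -[z zzs <-]; exists z; rewrite ?upd_vars.
Qed.

Lemma sat_in_vars_upd (E : nat -> A) y a : y < M -> enumerates E ->
  sat (upd E y a) (in_vars y zs) <-> P a.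
Proof.
move=> yM EP; rewrite sat_in_vars upd_eq EP.
by split=> -[z zzs za]; exists z => //; move: za; rewrite upd_vars // => ->.
Qed.

Lemma sat_relativize f (E : nat -> A) (e : nat -> submodel hP) :
  var_bound f <= M -> enumerates E -> (forall n, n < M -> E n = proj1_sig (e n)) ->
  sat e f <-> sat E (relativize zs f).
Proof.
elim: f E e => [|x y|r v|g IH|g IH k IH'|g IH k IH'|g IH k IH'|y g IH|y g IH]
  E e /=; rewrite ?geq_max.
- by [].
- move=> xyM _ Ee; rewrite !Ee ?(leq_trans _ xyM) ?ltnS ?leq_maxl ?leq_maxr //.
  by split=> [->|/proj1_sig_inj].
- move=> vM _ Ee; suff -> : (fun i => E (v i)) = (fun i => proj1_sig (e (v i))) by [].
  by apply: funext => i; rewrite Ee // (leq_trans _ vM) // (leq_bigmax i).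
- by move=> gM EP Ee; rewrite (IH E e).
- by move=> /andP [gM kM] EP Ee; rewrite (IH E e) // (IH' E e).
- by move=> /andP [gM kM] EP Ee; rewrite (IH E e) // (IH' E e).
- by move=> /andP [gM kM] EP Ee; rewrite (IH E e) // (IH' E e).
- move=> /andP [yM gM] EP Ee.
  have gE b : sat (upd e y b) g <-> sat (upd E y (proj1_sig b)) (relativize zs g).
    apply: IH => // [|n nM]; first exact: enumerates_upd.
    by rewrite /upd; case: eqP => // _; apply: Ee.
  split=> [[b /gE gb]|[a [/(sat_in_vars_upd _ yM EP) Pa ga]]].
    by exists (proj1_sig b); split=> //; apply/(sat_in_vars_upd _ yM EP)/(proj2_sig b).
  by exists (exist _ a Pa); apply/gE.
- move=> /andP [yM gM] EP Ee.
  have gE b : sat (upd e y b) g <-> sat (upd E y (proj1_sig b)) (relativize zs g).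
    apply: IH => // [|n nM]; first exact: enumerates_upd.
    by rewrite /upd; case: eqP => // _; apply: Ee.
  split=> [ga a /(sat_in_vars_upd _ yM EP) Pa|ga b].
    exact/(gE (exist _ a Pa)).
  by apply/gE/ga/(sat_in_vars_upd _ yM EP)/(proj2_sig b).
Qed.

End Relativization.

(* The fresh variables [var_bound phi], ..., [var_bound phi + n - 1] name the
   elements of the submodel. *)
Definition vartheta_upto (phi : form tau) (n : nat) : form tau :=
  Exs (iota (var_bound phi) n) (relativize (iota (var_bound phi) n) phi).

Definition span A n (g : 'I_n.+1 -> A) : structure tau :=
  @submodel tau A (fun a => exists i, g i = a) (g ord0) (ex_intro _ ord0 erefl).

Lemma vartheta_upto_sentence phi n : sentence phi -> sentence (vartheta_upto phi n).
Proof. by move=> phis x /free_Exs [/free_relativize [/phis|->]]. Qed.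

Lemma vartheta_uptoP A phi n : sentence phi ->
  models A (vartheta_upto phi n.+1) <-> exists g : 'I_n.+1 -> A, models (span g) phi.
Proof.
move=> phis; set M := var_bound phi; set zs := iota M n.+1.
have zs_ge z : z \in zs -> M <= z by rewrite mem_iota => /andP [].
have zsP z : z \in zs = (M <= z < M + n.+1) by rewrite mem_iota.
split.
- move=> /(_ (fun=> witness A)) /sat_Exs [t tphi _].
  pose g (i : 'I_n.+1) := t (M + i).
  pose E k := if k < M then g ord0 else t k.
  have EP : enumerates (fun a => exists i, g i = a) zs E.
    move=> a; split=> [[i <-]|[z /[dup] zzs]].
      by exists (M + i); rewrite ?zsP ?leq_addr ?ltn_add2l //= /E ltnNge leq_addr.
    rewrite zsP => /andP [Mz zn] <-.
    have zMn : z - M < n.+1 by rewrite ltn_subLR.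
    by exists (Ordinal zMn); rewrite /g /E ltnNge Mz /= subnKC.
  exists g; apply/modelsP => //.
  exists (fun=> witness (span g)).
  apply/(sat_relativize zs_ge (leqnn _) EP) => [k kM|]; first by rewrite /E kM.
  rewrite -(sat_free_eq (e := t)) // => x /free_relativize [/phis //|/zs_ge].
  by rewrite /E ltnNge => ->.
- case=> g gphi; apply/modelsP; first exact: vartheta_upto_sentence.
  pose E k := if k < M then g ord0 else g (inord (k - M)).
  have EP : enumerates (fun a => exists i, g i = a) zs E.
    move=> a; split=> [[i <-]|[z]].
      exists (M + i); first by rewrite zsP leq_addr ltn_add2l ltn_ord.
      by rewrite /E ltnNge leq_addr /= addKn inord_val.
    by rewrite zsP => /andP [Mz zn] <-; exists (inord (z - M)); rewrite /E ltnNge Mz.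
  exists (fun=> witness A); apply: (sat_Exs_of_free (t := E)).
    by move=> x /free_relativize [/phis|].
  move: gphi => /modelsP-/(_ phis) [e ge].
  apply/(sat_relativize zs_ge (leqnn _) EP (e := fun=> witness (span g))) => [k kM|].
    by rewrite /E kM.
  exact: sat_sentence ge.
Qed.

Lemma vartheta_sat_of_upto A phi n : sentence phi ->
  models A (vartheta_upto phi n.+1) -> vartheta_sat A phi.
Proof. by move=> phis /(vartheta_uptoP _ _ phis) [g gphi]; do 3 eexists; exact: gphi. Qed.

Lemma vartheta_sat_sigma02 A xs ys psi : qfree psi ->
  sentence (Exs xs (Alls ys psi)) -> vartheta_sat A (Exs xs (Alls ys psi)) ->
  models A (vartheta_upto (Exs xs (Alls ys psi)) (size xs).+1).
Proof.
move=> psiq phis [P [a0 [hP /modelsP-/(_ phis) [e /sat_Exs [t tpsi _]]]]].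
pose g (i : 'I_(size xs).+1) := nth a0 (a0 :: map (fun x => proj1_sig (t x)) xs) i.
have gP a : (exists i, g i = a) -> P a.
  by case=> -[[|k] kxs] <-; rewrite /g /= ?(nth_map 0) //; exact: proj2_sig.
apply/vartheta_uptoP => //; exists g.
pose incl : span g -> submodel hP := submodel_incl hP gP.
have [t' t't] : exists t' : nat -> span g, forall x, x \in xs -> incl (t' x) = t x.
  apply: preimage_assignment => x xxs.
  have ixs : (index x xs).+1 < (size xs).+1 by rewrite ltnS index_mem.
  have gx : g (Ordinal ixs) = proj1_sig (t x).
    by rewrite /g /= (nth_map 0) ?index_mem // nth_index.
  by exists (exist _ (proj1_sig (t x)) (ex_intro _ (Ordinal ixs) gx)); apply: proj1_sig_inj.
apply/modelsP => //; exists t'; apply: (sat_Exs_of_free (t := t')).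
  move=> x fx; apply: contraT => xxs; case: (phis x); exact/free_Exs.
apply: (sat_Alls_embedding (submodel_incl_embedding _ hP gP)) => //.
rewrite -(sat_free_eq (e := t)) // => x fx; apply/esym/t't.
by apply: contraT => xxs; case: (phis x); apply/free_Exs.
Qed.

Lemma injective_or_covering (X : Type) (x0 : X) n :
  (exists g : nat -> X, forall i j, i < n -> j < n -> g i = g j -> i = j) \/
  (exists g : nat -> X, forall a, exists2 i, i < n & g i = a).
Proof.
elim: n => [|n [[g g_inj]|[g g_cov]]].
- by left; exists (fun=> x0).
- case: (pselect (exists a, forall i, i < n -> g i <> a)) => [[a ga]|g_cov].
    left; exists (fun i => if i == n then a else g i) => i j.
    rewrite ltnS leq_eqVlt => /orP [/eqP ->|ilt];
      rewrite ltnS leq_eqVlt => /orP [/eqP ->|jlt] //; rewrite ?eqxx ?ltn_eqF //.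
    + by move=> /esym /(ga _ jlt).
    + by move=> /(ga _ ilt).
    + exact: g_inj.
  right; exists g => a; apply: contrapT => nga; apply: g_cov; exists a => i ilt gia.
  by apply: nga; exists i => //; apply: ltnW.
- by right; exists g => a; have [i ilt gia] := g_cov a; exists i => //; apply: ltnW.
Qed.

Lemma has_card_of_bijection A n (g : 'I_n -> A) :
  injective g -> (forall a, exists i, g i = a) -> has_card A n.
Proof.
move=> g_inj g_surj; exists g, (fun a => proj1_sig (cid (g_surj a))).
  by move=> i; apply: g_inj; exact: proj2_sig (cid (g_surj (g i))).
by move=> a; exact: proj2_sig (cid (g_surj a)).
Qed.

Lemma vartheta_sat_upto A phi n : sentence phi ->
  ~ (exists B, has_card B n.+1 /\ models B (FNeg phi)) ->
  vartheta_sat A phi -> models A (vartheta_upto phi n.+1).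
Proof.
move=> phis noneg [P [a0 [hP Pphi]]]; apply/vartheta_uptoP => //.
case: (injective_or_covering a0 n.+1) => [[g g_inj]|[g g_cov]].
- exists (fun i : 'I_n.+1 => g i); apply: contrapT => nphi; apply: noneg.
  exists (span (fun i : 'I_n.+1 => g i)); split; last exact/models_FNeg.
  apply: (@has_card_of_bijection _ _
    (fun i => exist _ (g i) (ex_intro _ i erefl) : span (fun i : 'I_n.+1 => g i))).
    by move=> i j /(congr1 (@proj1_sig _ _)) /g_inj ij; apply: val_inj; apply: ij.
  by case=> a [i gia]; exists i; exact: eq_exist.
- exists (fun i : 'I_n.+1 => if pselect (P (g i)) is left _ then g i else a0).
  apply: models_submodel_eq Pphi => // a; split=> [Pa|[i <-]]; last by case: pselect.
  have [i ilt gia] := g_cov a; exists (Ordinal ilt) => /=.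
  by case: pselect => [//|]; rewrite gia.
Qed.

End Semantics.

Local Open Scope classical_set_scope.

Lemma ultrafilter_containing (I Q : Type) (q0 : Q) (B : Q -> set I) :
  (forall p q, exists r, B r `<=` B p `&` B q) -> (forall q, exists i, B q i) ->
  exists F : set_system I, UltraFilter F /\ forall q, F (B q).
Proof.
move=> B_dir B_ne.
have FB : Filter (filter_from setT B).
  apply: filter_from_filter; first by exists q0.
  by move=> p q _ _; have [r] := B_dir p q; exists r.
have [F [FU BF]] := ultraFilterLemma (filter_from_proper FB (fun q _ => B_ne q)).
by exists F; split=> // q; apply: BF; exists q.
Qed.

Section FilterFacts.
Variables (I : Type) (F : set_system I).
Context {FF : Filter F}.
Implicit Types S T : I -> Prop.

Lemma filter_and S T : F (fun i => S i /\ T i) <-> F S /\ F T.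
Proof.
split=> [FST|[FS FT]]; last exact: filterI.
by split; apply: filterS FST => i [].
Qed.

Lemma filter_forall_ord n (S : 'I_n -> I -> Prop) :
  (forall k, F (S k)) -> F (fun i => forall k, S k i).
Proof.
elim: n S => [|n IH] S FS; first by apply: filterE => i [].
apply: filterS2 (FS ord0) (IH _ (fun k => FS (lift ord0 k))) => i S0 Sl k.
by case: (unliftP ord0 k) => [j ->|->].
Qed.

End FilterFacts.

Section UltraFilterFacts.
Variables (I : Type) (F : set_system I).
Context {FU : UltraFilter F}.
Implicit Types S T : I -> Prop.

Lemma ultra_not S : F (fun i => ~ S i) <-> ~ F S.
Proof.
split=> [FnS FS|nFS]; last by case: (in_ultra_setVsetC S FU).
by have [i []] := filter_ex (filterI FnS FS).
Qed.

Lemma ultra_or S T : F (fun i => S i \/ T i) <-> F S \/ F T.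
Proof.
split=> [FST|[FS|FT]]; last 2 first.
- by apply: filterS FS => i; left.
- by apply: filterS FT => i; right.
case: (in_ultra_setVsetC S FU) => [|FnS]; first by left.
by right; apply: filterS2 FST FnS => i [].
Qed.

Lemma ultra_imply S T : F (fun i => S i -> T i) <-> (F S -> F T).
Proof.
split=> [FST FS|FSFT]; first by apply: filterS2 FST FS => i; apply.
case: (in_ultra_setVsetC S FU) => [/FSFT FT|FnS].
  by apply: filterS FT => i Ti _.
by apply: filterS FnS => i nS /nS.
Qed.

End UltraFilterFacts.

Section Ultraproduct.
Variables (tau : signature) (I : Type) (F : set_system I).
Context {FU : UltraFilter F}.
Variable M : I -> structure tau.

Definition ueq (x y : forall i, M i) : Prop := F (fun i => x i = y i).

(* Elements of the ultraproduct are the [ueq]-classes, represented as predicates. *)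
Definition ultra_carrier := {c : (forall i, M i) -> Prop | exists x, c = ueq x}.

Definition ucls (x : forall i, M i) : ultra_carrier := exist _ (ueq x) (ex_intro _ x erefl).

Definition urep (c : ultra_carrier) : forall i, M i := proj1_sig (cid (proj2_sig c)).

Definition ultraproduct : structure tau :=
  @Structure tau ultra_carrier (ucls (fun i => witness (M i)))
    (fun r v => F (fun i => interp (fun k => urep (v k) i))).

Lemma ucls_rep c : ucls (urep c) = c.
Proof. by apply: proj1_sig_inj; rewrite /urep /=; case: cid. Qed.

Lemma ueq_refl x : ueq x x.
Proof. exact: filterE. Qed.

Lemma ueq_sym x y : ueq x y -> ueq y x.
Proof. exact: filterS. Qed.

Lemma ueq_trans x y z : ueq x y -> ueq y z -> ueq x z.
Proof. by apply: filterS2 => i -> ->. Qed.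

Lemma ucls_eq x y : ucls x = ucls y <-> ueq x y.
Proof.
split=> [/(congr1 (@proj1_sig _ _)) /= xy|xy].
  by apply: ueq_sym; rewrite -xy; apply: ueq_refl.
apply: proj1_sig_inj; apply: funext => z; apply: propext.
by split; [apply: ueq_trans (ueq_sym xy)|apply: ueq_trans xy].
Qed.

Lemma ueq_rep x : ueq (urep (ucls x)) x.
Proof. by apply/ucls_eq; rewrite ucls_rep. Qed.

Lemma interp_ucls r (v : 'I_(arity r) -> forall i, M i) :
  @interp tau ultraproduct r (fun k => ucls (v k)) <-> F (fun i => interp (fun k => v k i)).
Proof.
have rep_v : F (fun i => forall k, urep (ucls (v k)) i = v k i).
  by apply: filter_forall_ord => k; apply: ueq_rep.
split=> /= Fv; [apply: filterS2 rep_v Fv|apply: filterS2 rep_v Fv] => i vi.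
  by have -> : (fun k => v k i) = (fun k => urep (ucls (v k)) i) by apply: funext.
by have <- : (fun k => v k i) = (fun k => urep (ucls (v k)) i) by apply: funext.
Qed.

Lemma partial_choice (P : forall i, M i -> Prop) :
  exists a : forall i, M i, forall i, (exists b, P i b) -> P i (a i).
Proof.
exists (fun i => if pselect (exists b, P i b) is left ex then proj1_sig (cid ex)
  else witness (M i)).
by move=> i ex; case: pselect => [ex'|//]; exact: proj2_sig (cid ex').
Qed.

Lemma urep_upd (e : nat -> ultraproduct) y c i :
  (fun n => urep (upd e y c n) i) = upd (fun n => urep (e n) i) y (urep c i).
Proof. by apply: funext => n; rewrite /upd; case: eqP. Qed.

Theorem Los f (e : nat -> ultraproduct) :
  sat e f <-> F (fun i => sat (fun n => urep (e n) i) f).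
Proof.
elim: f e => [|x y|r v|g IH|g IH h IH'|g IH h IH'|g IH h IH'|y g IH|y g IH] e /=.
- by split=> // /filter_const.
- by have := ucls_eq (urep (e x)) (urep (e y)); rewrite !ucls_rep.
- by [].
- by rewrite IH ultra_not.
- by rewrite IH IH' filter_and.
- by rewrite IH IH' ultra_or.
- by rewrite IH IH' ultra_imply.
- split=> [[c /IH Fc]|Fex].
    by apply: filterS Fc => i; rewrite urep_upd; exists (urep c i).
  have [a aP] := partial_choice (fun i b => sat (upd (fun n => urep (e n) i) y b) g).
  exists (ucls a); apply/IH.
  by apply: filterS2 Fex (ueq_rep a) => i /aP ga ra; rewrite urep_upd ra.
- split=> [Fall|Fall c]; last first.
    by apply/IH; apply: filterS Fall => i gi; rewrite urep_upd.
  apply: contrapT => /(ultra_not _).2 Fnall.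
  have [a aP] := partial_choice (fun i b => ~ sat (upd (fun n => urep (e n) i) y b) g).
  have /IH Fa := Fall (ucls a).
  apply: (filter_not_empty F); apply: filterS3 Fnall (ueq_rep a) Fa => i nall ra.
  by rewrite urep_upd ra; apply: aP; apply/existsNP.
Qed.

Lemma models_ultraproduct f : sentence f ->
  models ultraproduct f <-> F (fun i => models (M i) f).
Proof.
move=> fs; rewrite modelsP //; split=> [[e /Los Fe]|Ff].
  by apply: filterS Fe => i ei; apply/modelsP => //; eexists; exact: ei.
exists (fun=> witness ultraproduct); apply/Los; exact: filterS Ff => i; apply.
Qed.

End Ultraproduct.

Section Diagram.
Variables (tau : signature) (A : structure tau).
Local Notation nth_elt s p := (nth (witness A) s p).

Definition signed (P : Prop) (f : form tau) : form tau :=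
  if pselect P then f else FNeg f.

Lemma sat_signed (B : structure tau) (e : nat -> B) P f :
  sat e (signed P f) <-> (P <-> sat e f).
Proof. by rewrite /signed; case: pselect => /= Ph; tauto. Qed.

Definition bigconj (X : Type) (l : seq X) (g : X -> form tau) : form tau :=
  foldr (fun x acc => FAnd (g x) acc) (FNeg (FBot tau)) l.

Lemma sat_bigconj (B : structure tau) (e : nat -> B) X (l : seq X) g :
  sat e (bigconj l g) <-> forall x, List.In x l -> sat e (g x).
Proof.
elim: l => [|x l IH] /=; first by split=> [_ y []|_ []].
rewrite IH; split=> [[gx gl] y [<-|yl]|gl]; [by []|exact: gl|].
by split=> [|y yl]; apply: gl; [left|right].
Qed.

Lemma qfree_bigconj X (l : seq X) g : (forall x, qfree (g x)) -> qfree (bigconj l g).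
Proof. by move=> gq; elim: l => [|x l IH] //=. Qed.

Lemma free_bigconj X (l : seq X) g y :
  free y (bigconj l g) -> exists2 x, List.In x l & free y (g x).
Proof.
elim: l => [|x l IH] //= [fy|/IH [z zl fy]]; first by exists x => //; left.
by exists z => //; right.
Qed.

(* The finite piece of the diagram of [A] spanned by the elements [s] and
   the relation symbols [rs]; the variable [p] stands for the [p]-th element of [s]. *)
Definition diagram (s : seq A) (rs : seq (rsym tau)) : form tau :=
  FAnd
    (bigconj (iota 0 (size s)) (fun p => bigconj (iota 0 (size s)) (fun q =>
       signed (nth_elt s p = nth_elt s q) (FEq tau p q))))
    (bigconj rs (fun r => bigconj (enum {ffun 'I_(arity r) -> 'I_(size s)}) (fun v =>
       signed (interp (fun k => nth_elt s (v k))) (FRel (fun k => nat_of_ord (v k)))))).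

Lemma In_iota p n : List.In p (iota 0 n) <-> p < n.
Proof. by rewrite InE mem_iota. Qed.

Lemma diagram_qfree s rs : qfree (diagram s rs).
Proof.
by split; apply: qfree_bigconj => x; apply: qfree_bigconj => y; rewrite /signed;
  case: pselect.
Qed.

Lemma sat_diagram_nth s rs : sat (fun n => nth_elt s n) (diagram s rs).
Proof. by split; apply/sat_bigconj => x _; apply/sat_bigconj => y _; apply/sat_signed. Qed.

Lemma diagram_eq (B : structure tau) (e : nat -> B) s rs : sat e (diagram s rs) ->
  forall p q, p < size s -> q < size s -> (nth_elt s p = nth_elt s q <-> e p = e q).
Proof.
case=> /sat_bigconj sat_eq _ p q /In_iota ps /In_iota qs.
by have /sat_bigconj /(_ q qs) /sat_signed := sat_eq p ps.
Qed.

Lemma diagram_rel (B : structure tau) (e : nat -> B) s rs : sat e (diagram s rs) ->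
  forall r, List.In r rs -> forall v : 'I_(arity r) -> 'I_(size s),
  interp (fun k => nth_elt s (v k)) <-> interp (fun k => e (v k)).
Proof.
case=> _ /sat_bigconj sat_rel r rrs v.
have /sat_bigconj /(_ [ffun k => v k] (proj2 (InE _ _) (mem_enum _ _))) := sat_rel r rrs.
rewrite sat_signed /=.
have -> : (fun k => nth_elt s ([ffun k => v k] k)) = (fun k => nth_elt s (v k)).
  by apply: funext => k; rewrite ffunE.
have -> // : (fun k => e ([ffun k => v k] k)) = (fun k => e (v k)).
by apply: funext => k; rewrite ffunE.
Qed.

End Diagram.

Section DiagramEmbedding.
Variables (tau : signature) (A : structure tau).
Local Notation nth_elt s p := (nth (witness A) s p).

Definition diagram_index := (seq A * seq (rsym tau))%type.

Definition covers (q j : diagram_index) : Prop :=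
  (forall a, List.In a q.1 -> List.In a j.1) /\ (forall r, List.In r q.2 -> List.In r j.2).

Lemma diagram_ultrafilter :
  exists V : set_system diagram_index, UltraFilter V /\ forall q, V (covers q).
Proof.
apply: (ultrafilter_containing ([::], [::])) => [p q|q]; last by exists q.
exists (p.1 ++ q.1, p.2 ++ q.2) => j [cov1 cov2].
by split; split=> x x_in; [apply: cov1|apply: cov2|apply: cov1|apply: cov2];
  apply/In_cat; tauto.
Qed.

Variables (V : set_system diagram_index) (B : diagram_index -> structure tau).
Context {VU : UltraFilter V}.
Hypothesis V_covers : forall q, V (covers q).
Variable t : forall j, nat -> B j.
Hypothesis t_diagram : forall j, sat (t j) (diagram j.1 j.2).

Definition diagram_elt (a : A) (j : diagram_index) : B j :=
  if pselect (exists p, p < size j.1 /\ nth_elt j.1 p = a) is left ex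
  then t j (proj1_sig (cid ex)) else witness (B j).

Lemma diagram_eltE a j : List.In a j.1 ->
  exists p : 'I_(size j.1), nth_elt j.1 p = a /\ diagram_elt a j = t j p.
Proof.
move=> aj; rewrite /diagram_elt; case: pselect => [ex|[]]; last first.
  by have [p ps pa] := In_nth (witness A) aj; exists p.
by case: (cid ex) => p [ps pa] /=; exists (Ordinal ps).
Qed.

Definition diagram_embed (a : A) : ultraproduct V B := ucls V (diagram_elt a).

Lemma diagram_embed_inj : injective diagram_embed.
Proof.
move=> a b /ucls_eq Vab.
have [j [[cov_elts _] abj]] := filter_ex (filterI (V_covers ([:: a; b], [::])) Vab).
have [p [pa ap]] := diagram_eltE (cov_elts a (or_introl erefl)).
have [q [qb bq]] := diagram_eltE (cov_elts b (or_intror (or_introl erefl))).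
by rewrite -pa -qb; apply/(diagram_eq (t_diagram j) (ltn_ord p) (ltn_ord q)); rewrite -ap -bq.
Qed.

Lemma diagram_elt_interp r (v : 'I_(arity r) -> A) j :
  covers ([seq v k | k <- enum 'I_(arity r)], [:: r]) j ->
  interp v <-> interp (fun k => diagram_elt (v k) j).
Proof.
case=> cov_elts cov_r.
have idx k : exists p : 'I_(size j.1), nth_elt j.1 p = v k /\ diagram_elt (v k) j = t j p.
  by apply/diagram_eltE/cov_elts/In_map/InE; rewrite mem_enum.
pose w k := proj1_sig (cid (idx k)).
have wE k : nth_elt j.1 (w k) = v k /\ diagram_elt (v k) j = t j (w k).
  exact: proj2_sig (cid (idx k)).
have vw : (fun k => nth_elt j.1 (w k)) = v by apply: funext => k; apply: (wE k).1.
have dw : (fun k => t j (w k)) = (fun k => diagram_elt (v k) j).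
  by apply: funext => k; apply/esym/(wE k).2.
by have := diagram_rel (t_diagram j) (cov_r r (or_introl erefl)) w; rewrite vw dw.
Qed.

Lemma diagram_embedding : embedding diagram_embed.
Proof.
split=> [|r v]; first exact: diagram_embed_inj.
rewrite interp_ucls; have Vcov := V_covers ([seq v k | k <- enum 'I_(arity r)], [:: r]).
split=> [vA|Vv]; first by apply: filterS Vcov => j /diagram_elt_interp <-.
by have [j [/diagram_elt_interp -> ]] := filter_ex (filterI Vcov Vv).
Qed.

End DiagramEmbedding.

Section LosTarski.
Variables (tau : signature) (phi : form tau).
Hypothesis phis : sentence phi.

Definition qf_sufficient (d : form tau) : Prop :=
  qfree d /\ forall B : structure tau, (exists t : nat -> B, sat t d) -> models B phi.

Lemma qf_sufficient_FBot : qf_sufficient (FBot tau).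
Proof. by split=> // B [t []]. Qed.

Lemma qf_sufficient_FOr d e : qf_sufficient d -> qf_sufficient e -> qf_sufficient (FOr d e).
Proof.
move=> [dq d_suff] [eq e_suff]; split=> // B [t [td|te]].
  by apply: d_suff; exists t.
by apply: e_suff; exists t.
Qed.

Lemma existential_of_qf_sufficient d : qf_sufficient d ->
  (forall A, models A phi -> exists t : nat -> A, sat t d) ->
  sigma01 (Exs (iota 0 (var_bound d)) d) /\ log_equiv phi (Exs (iota 0 (var_bound d)) d).
Proof.
move=> [dq d_suff] d_nec.
have dfree x : free x d -> x \in iota 0 (var_bound d).
  by move/free_var_bound; rewrite mem_iota.
split.
  split; last by exists (iota 0 (var_bound d)), d.
  by move=> x /free_Exs [/dfree ->].
move=> A; split=> [/d_nec [t td] e|]; first exact: sat_Exs_of_free td.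
by move=> /(_ (fun=> witness A)) /sat_Exs [t td _]; apply: d_suff; exists t.
Qed.

Hypothesis phi_ext : preserved_by_extensions phi.

(* If not, every finite piece of the diagram of [A] is satisfiable in a model
   of [~ phi]; a suitable ultraproduct of these models contains a copy of [A]
   and still satisfies [~ phi]. *)
Lemma qf_sufficient_satisfiable A : models A phi ->
  exists d, qf_sufficient d /\ exists t : nat -> A, sat t d.
Proof.
move=> Aphi; apply: contrapT => no_suff.
have counter (j : diagram_index A) : exists Bt : {B : structure tau & nat -> B},
    sat (projT2 Bt) (diagram j.1 j.2) /\ ~ models (projT1 Bt) phi.
  apply: contrapT => no_counter; apply: no_suff; exists (diagram j.1 j.2); split.
    split=> [|B [t tj]]; first exact: diagram_qfree.
    by apply: contrapT => nphi; apply: no_counter; exists (existT _ B t).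
  by exists (fun n => nth (witness A) j.1 n); apply: sat_diagram_nth.
have [Bt Bt_spec] := choice counter.
have [V [VU V_covers]] := diagram_ultrafilter A.
have emb := diagram_embedding (B := fun j => projT1 (Bt j)) V_covers
  (t := fun j => projT2 (Bt j)) (fun j => (Bt_spec j).1).
have := phi_ext (emb VU) Aphi; rewrite models_ultraproduct // => /filter_ex [j].
exact: (Bt_spec j).2.
Qed.

(* If no [qf_sufficient] formula held in every model of [phi], a suitable
   ultraproduct of models of [phi], one refuting each such formula, would
   contradict [qf_sufficient_satisfiable]. *)
Theorem existential_of_preserved : exists psi, sigma01 psi /\ log_equiv phi psi.
Proof.
case: (pselect (exists d, qf_sufficient d /\
  forall A, models A phi -> exists t : nat -> A, sat t d)) => [[d [d_suff d_nec]]|none].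
  by eexists; exact: existential_of_qf_sufficient d_suff d_nec.
exfalso; pose D := {d | qf_sufficient d}.
have counter (d : D) : exists A, models A phi /\ ~ exists t : nat -> A, sat t (proj1_sig d).
  apply: contrapT => no_counter; apply: none; exists (proj1_sig d); split=> [|A Aphi].
    exact: proj2_sig d.
  by apply: contrapT => nsat; apply: no_counter; exists A.
have [M M_spec] := choice counter.
pose weaker (d e : D) := forall B : structure tau,
  (exists t : nat -> B, sat t (proj1_sig d)) -> exists t : nat -> B, sat t (proj1_sig e).
have [U [UU U_weaker]] : exists U : set_system D, UltraFilter U /\ forall d, U (weaker d).
  apply: (ultrafilter_containing (exist _ _ qf_sufficient_FBot)) => [d e|d]; last by exists d.
  exists (exist _ _ (qf_sufficient_FOr (proj2_sig d) (proj2_sig e))).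
  by move=> f f_weaker; split=> B [t td]; apply: f_weaker; exists t; [left|right].
have UMphi : models (ultraproduct U M) phi.
  by apply/models_ultraproduct => //; apply: filterE => d; exact: (M_spec d).1.
have [d [d_suff [t /Los Ud]]] := qf_sufficient_satisfiable UMphi.
have [e [e_weaker esat]] := filter_ex (filterI (U_weaker (exist _ d d_suff)) Ud).
by apply: (M_spec e).2; apply: e_weaker; exists (fun n => urep (t n) e).
Qed.

End LosTarski.

Theorem corollary1 (tau : signature) (phi : form tau) :
  sentence phi ->
  (sigma02 phi -> expressible (fun A => vartheta_sat A phi)) /\
  ((exists n : nat, 1 <= n /\
      ~ (exists A : structure tau, has_card A n /\ models A (FNeg phi))) ->
     expressible (fun A => vartheta_sat A phi)) /\
  (expressed_by (fun A => vartheta_sat A phi) phi <->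
     exists psi : form tau, sigma01 psi /\ log_equiv phi psi).
Proof.
move=> phis; split; [|split].
- case=> _ [xs [ys [psi [psiq phiE]]]]; subst phi.
  exists (vartheta_upto (Exs xs (Alls ys psi)) (size xs).+1).
  split=> [|A]; first exact: vartheta_upto_sentence.
  by split; [exact: vartheta_sat_sigma02|exact: vartheta_sat_of_upto].
- case=> -[|n] [//= _ no_neg].
  exists (vartheta_upto phi n.+1); split=> [|A]; first exact: vartheta_upto_sentence.
  by split; [exact: vartheta_sat_upto|exact: vartheta_sat_of_upto].
- split=> [[_ vphi]|]; last exact: vartheta_of_existential.
  exact: existential_of_preserved phis (preserved_of_vartheta phis vphi).
Qed.
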